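(* Let $k\geq 1$ and let $T$ be a binary phylogenetic $X$-tree with $|X| = 2k$. Let $P_1,\ldots,P_k$ be pairwise edge-disjoint leaf-to-leaf paths in $T$, where $P_i$ has endpoints $a_i,b_i$. For $p=(p_1,\ldots,p_k)\in\{0,1\}^k$ define $f_p: X\to\{a,b\}$ by $f_p(v)=a$ if for some $i\in\{1,\dots,k\}$ either ($v=a_i$ and $p_i=0$) or ($v=b_i$ and $p_i=1$), and $f_p(v)=b$ otherwise. Then the map $p\mapsto f_p$ is a bijection from $\{0,1\}^k$ to $A_k(T)$.
   Context: A phylogenetic $X$-tree is a tree with no vertices of degree 2 whose leaves are bijectively labelled by (and identified with) $X$; binary means maximum degree 3. A leaf-to-leaf path is a path whose two endpoints are (distinct) leaves. For a binary character $f: X\to\{a,b\}$, $l(f,T)$ is the minimum, over all maps $g:V(T)\to\{a,b\}$ with $g|_X=f$, of the number of edges $\{u,v\}$ with $g(u)\ne g(v)$; $A_k(T)$ is the set of all binary characters $f$ on $X$ with $l(f,T)=k$. *)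

From mathcomp Require Import all_boot.
Set Implicit Arguments. Unset Strict Implicit. Unset Printing Implicit Defensive.

Section Defs.
Variables (V : finType) (e : rel V).

Definition simple_graph : Prop := symmetric e /\ irreflexive e.

Definition deg (v : V) : nat := #|[set u | e v u]|.

Definition connected_graph : Prop := forall u v, connect e u v.
Definition acyclic : Prop := forall s : seq V, uniq s -> 3 <= size s -> ~~ cycle e s.
Definition is_tree : Prop := simple_graph /\ connected_graph /\ acyclic.

Definition is_leaf (v : V) : bool := deg v == 1.

Definition binary_phylo_tree : Prop :=
  is_tree /\ (forall v, deg v != 2) /\ (forall v, deg v <= 3).

End Defs.

(* The leaf set X, identified with the labels (a finType by subtyping). *)
Notation leafT e := {v | is_leaf e v}.

Section Defs2.
Variables (V : finType) (e : rel V).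

Definition edges : {set {set V}} :=
  [set [set x.1; x.2] | x in [pred x : V * V | e x.1 x.2]].

Definition changes (g : V -> bool) : nat :=
  #|[set E in edges | [exists u in E, exists v in E, g u != g v]]|.

(* Binary characters are maps X -> bool (true = state a, false = state b).
   Parsimony score l(f,T): minimum of changes g over extensions g of f.
   (#|edges| is an upper bound for every term, so it is a neutral start.) *)
Definition extends (g : {ffun V -> bool}) (f : {ffun leafT e -> bool}) : bool :=
  [forall x : leafT e, g (val x) == f x].

Definition pscore (f : {ffun leafT e -> bool}) : nat :=
  \big[minn/#|edges|]_(g : {ffun V -> bool} | extends g f) changes g.

Definition edge_of (s : seq V) (u v : V) : bool :=
  ((u, v) \in zip s (behead s)) || ((v, u) \in zip s (behead s)).

Definition leaf_path (s : seq V) (x y : leafT e) : Prop :=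
  val x != val y /\
  exists t, s = val x :: t /\ path e (val x) t /\ uniq s /\ last (val x) t = val y.

Definition fchar (k : nat) (a b : 'I_k -> leafT e) (p : {ffun 'I_k -> bool})
  : {ffun leafT e -> bool} :=
  [ffun v => [exists i, ((v == a i) && ~~ p i) || ((v == b i) && p i)]].

End Defs2.

From mathcomp Require Import all_boot zify.
Set Implicit Arguments. Unset Strict Implicit. Unset Printing Implicit Defensive.

(* Every extension of a character f must change somewhere along each path P_i
   whose endpoints get different states, and the paths are edge-disjoint, so
   l(f, T) is at least the number of such paths; giving every internal vertex
   the same state shows l(f, T) <= min(#a, #b) <= k.  Hence each f_p scores k.
   Conversely, if l(f, T) = k then both states occur on exactly k leaves.  If
   some a_i and b_i had the same state c, walk along P_i: the leaves on the a_i
   side of an edge of P_i are an odd number (every other path stays on one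
   side), c is the strict majority on that side for the first edge and a strict
   minority for the last, so it switches at an inner vertex w.  Giving state c
   to the near side of the edge before w, to w and to the far side of the edge
   after w costs at most one edge (the third one at w) plus k - 2 mismatched
   leaves, contradicting l(f, T) = k. *)

Lemma bigmin_le (I : finType) (P : pred I) (F : I -> nat) m i0 :
  P i0 -> \big[minn/m]_(i | P i) F i <= F i0.
Proof.
move=> Pi0; have : i0 \in index_enum I := mem_index_enum i0.
elim: (index_enum I) => // j s IH; rewrite inE big_cons => /predU1P [<-|/IH le].
  by rewrite Pi0 geq_minl.
by case: ifP => // _; exact: leq_trans (geq_minr _ _) le.
Qed.

Lemma bigmin_ge (I : finType) (P : pred I) (F : I -> nat) m n :
  n <= m -> (forall i, P i -> n <= F i) -> n <= \big[minn/m]_(i | P i) F i.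
Proof.
by move=> nm nF; apply: (big_ind (fun x => n <= x)) => // x y nx ny; rewrite leq_min nx ny.
Qed.

Lemma leq_card_witness (I T : finType) (A : {set I}) (B : {set T}) (R : I -> T -> bool) :
  (forall i, i \in A -> exists2 x, x \in B & R i x) ->
  {in A &, forall i j x, R i x -> R j x -> i = j} -> #|A| <= #|B|.
Proof.
move=> exR uniqR; pose w i := [pick x in B | R i x].
have wP i : i \in A -> exists2 x, w i = Some x & (x \in B) && R i x.
  move=> iA; rewrite /w; case: pickP => [x xBR|none]; first by exists x.
  by have [x xB Rix] := exR i iA; have := none x; rewrite xB Rix.
rewrite -(card_imset B (@Some_inj _)) -(card_in_imset (f := w)) => [|i j iA jA wij].
  apply/subset_leq_card/subsetP => _ /imsetP [i iA ->].
  by have [x -> /andP [xB _]] := wP i iA; rewrite imset_f.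
have [x wix /andP [_ Rix]] := wP i iA; have [y wjy /andP [_ Rjy]] := wP j jA.
by apply: uniqR iA jA _ Rix _; move: wij; rewrite wix wjy => -[->].
Qed.

Lemma connect_forward_closed (T : finType) (r : rel T) (A : pred T) x y :
  (forall u v, A u -> r u v -> A v) -> A x -> connect r x y -> A y.
Proof.
move=> closedA + /connectP [s]; elim: s x => [|z s IH] x Ax /=; first by move=> _ ->.
by case/andP=> rxz; apply: IH; exact: closedA rxz.
Qed.

Lemma path_zip (T : eqType) (r : rel T) x t uv :
  path r x t -> uv \in zip (x :: t) t -> r uv.1 uv.2.
Proof.
elim: t x => [|y t IH] x //= /andP [rxy pt]; rewrite inE => /predU1P [-> //|].
exact: IH.
Qed.

Lemma zip_change (T : eqType) (g : T -> bool) x t :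
  g x != g (last x t) -> exists2 uv, uv \in zip (x :: t) t & g uv.1 != g uv.2.
Proof.
elim: t x => [|y t IH] x /=; first by rewrite eqxx.
have [gxy|gxy _] := eqVneq (g x) (g y); last by exists (x, y); rewrite ?inE ?eqxx.
by rewrite gxy => /IH [uv uvt guv]; exists uv; rewrite // inE uvt orbT.
Qed.

Lemma mem_zip_last (T : eqType) (x : T) t : t != [::] ->
  exists w, (w, last x t) \in zip (x :: t) t.
Proof.
elim: t x => [//|z [|z' t] IH] x _; first by exists x; rewrite /= inE eqxx.
by have [w wt] := IH z isT; exists w; rewrite /= inE wt orbT.
Qed.

Lemma mem_zip_nth (T : eqType) (x0 x : T) t j : j < size t ->
  (nth x0 (x :: t) j, nth x0 t j) \in zip (x :: t) t.
Proof.
elim: t x j => [//|z t IH] x [|j] /=; first by rewrite inE eqxx.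
by rewrite ltnS => jt; rewrite inE (IH z j jt) orbT.
Qed.

Lemma ex_switch (g : nat -> bool) n : g 0 -> ~~ g n -> exists2 j, j < n & g j && ~~ g j.+1.
Proof.
elim: n => [-> //|n IH] g0 gn.
have [gn'|ngn] := boolP (g n); first by exists n; rewrite ?gn'.
by have [j jn gj] := IH g0 ngn; exists j; first exact: ltnW.
Qed.

Lemma edge_ofC (T : finType) (s : seq T) u v : edge_of s u v = edge_of s v u.
Proof. by rewrite /edge_of orbC. Qed.

Lemma edge_of_set2 (T : finType) (s : seq T) u v x y :
  edge_of s u v -> u != v -> [set u; v] = [set x; y] -> edge_of s x y.
Proof.
move=> suv nuv E.
have xuv : (x == u) || (x == v) by rewrite -in_set2 E set21.
have yuv : (y == u) || (y == v) by rewrite -in_set2 E set22.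
have uxy : (u == x) || (u == y) by rewrite -in_set2 -E set21.
have vxy : (v == x) || (v == y) by rewrite -in_set2 -E set22.
case/orP: xuv yuv => /eqP xE /orP [] /eqP yE; subst x y.
- by move: vxy; rewrite orbb eq_sym (negbTE nuv).
- exact: suv.
- by rewrite edge_ofC.
- by move: uxy; rewrite orbb (negbTE nuv).
Qed.

Lemma changes_le (V : finType) (e : rel V) (g h : V -> bool) :
  changes e g <= changes e h + #|[set E in edges e | [exists x in E, g x != h x]]|.
Proof.
rewrite /changes; apply: leq_trans (leq_card_setU _ _); apply/subset_leq_card/subsetP => E.
rewrite !inE => /andP [-> /existsP [u /andP [uE /existsP [v /andP [vE guv]]]]] /=.
have [huv|huv] := eqVneq (h u) (h v); last first.
  by apply/orP; left; apply/existsP; exists u; rewrite uE; apply/existsP; exists v; rewrite vE.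
apply/orP; right; apply/existsP.
have [gu|gu] := eqVneq (g u) (h u); last by exists u; rewrite uE.
by exists v; rewrite vE -huv -gu eq_sym.
Qed.

Lemma changes_setC (V : finType) (e : rel V) (W : {set V}) :
  changes e (fun v => v \in ~: W) = changes e (fun v => v \in W).
Proof.
apply: eq_card => E; rewrite !inE; apply: andb_id2l => _.
apply: eq_existsb => u; apply: andb_id2l => _; apply: eq_existsb => v.
by rewrite !inE; case: (u \in W); case: (v \in W).
Qed.

Lemma changed_edge (V : finType) (e : rel V) (g : V -> bool) E : symmetric e ->
  E \in edges e -> [exists u in E, exists v in E, g u != g v] ->
  exists x y, [/\ e x y, E = [set x; y], g x & ~~ g y].
Proof.
move=> e_sym /imsetP [[x y] /= exy ->] /existsP [u /andP [uE /existsP [v /andP [vE guv]]]].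
have gxy : g x != g y.
  by move: uE vE guv; rewrite !inE => /orP [] /eqP -> /orP [] /eqP ->; rewrite ?eqxx // eq_sym.
have [gx|ngx] := boolP (g x).
  by exists x, y; split => //; apply: contra gxy => gy; rewrite gx gy.
exists y, x; split => //; first by rewrite e_sym.
  by rewrite setUC.
by apply: contraR gxy => ngy; rewrite (negbTE ngx) (negbTE ngy).
Qed.

Lemma changes_const (V : finType) (e : rel V) (g : V -> bool) :
  (forall u v, g u = g v) -> changes e g = 0.
Proof.
move=> gc; apply: eq_card0 => E; rewrite !inE.
by apply/negP => /andP [_ /existsP [u /andP [_ /existsP [v /andP [_]]]]]; rewrite (gc u v) eqxx.
Qed.

Section Tree.
Variables (V : finType) (e : rel V).
Hypotheses (e_sym : symmetric e) (e_irr : irreflexive e).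
Hypotheses (conn : connected_graph e) (acyc : acyclic e).
Hypothesis deg3 : forall v, deg e v <= 3.

Lemma leaf_edge_uniq v u u' : is_leaf e v -> e v u -> e v u' -> u = u'.
Proof.
rewrite /is_leaf /deg => /cards1P [w Hw] evu evu'.
have : u \in [set u | e v u] by rewrite inE.
have : u' \in [set u | e v u] by rewrite inE.
by rewrite Hw !inE => /eqP -> /eqP ->.
Qed.

Lemma mid_nonleaf u w z : e u w -> e w z -> u != z -> ~~ is_leaf e w.
Proof.
move=> euw ewz; apply: contra => lw; apply/eqP.
by apply: leaf_edge_uniq lw _ ewz; rewrite e_sym.
Qed.

Definition leaf_nbr (l : leafT e) : V := odflt (val l) [pick u | e (val l) u].

Lemma leaf_nbrE (l : leafT e) u : e (val l) u -> leaf_nbr l = u.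
Proof.
move=> elu; rewrite /leaf_nbr; case: pickP => [u' /= elu'|/(_ u)]; last by rewrite elu.
exact: leaf_edge_uniq (valP l) elu' elu.
Qed.

Lemma leaf_edgeE (l : leafT e) E : E \in edges e -> val l \in E -> E = [set val l; leaf_nbr l].
Proof.
move=> /imsetP [[x y] exy ->]; have {}exy : e x y := exy.
rewrite in_set2 /= => /orP [] /eqP lE; rewrite -lE in exy *; first by rewrite (leaf_nbrE exy).
by rewrite e_sym in exy; rewrite (leaf_nbrE exy) setUC.
Qed.

Section Extension.
Variable f : {ffun leafT e -> bool}.

Definition leaf_ext (W : {set V}) : {ffun V -> bool} :=
  [ffun v => if insub v is Some l then f l else v \in W].

Definition mismatch (W : {set V}) : {set leafT e} := [set l | f l != (val l \in W)].

Lemma leaf_ext_extends W : extends (leaf_ext W) f.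
Proof. by apply/forallP => l; rewrite ffunE valK. Qed.

Lemma changes_leaf_ext W :
  changes e (leaf_ext W) <= changes e (fun v => v \in W) + #|mismatch W|.
Proof.
apply: leq_trans (changes_le _ _ (fun v => v \in W)) _; rewrite leq_add2l.
apply: leq_trans (leq_imset_card (fun l => [set val l; leaf_nbr l]) (mismatch W)).
apply/subset_leq_card/subsetP => E; rewrite inE => /andP [Eedge /existsP [x /andP [xE]]].
rewrite ffunE; case: insubP => [l _ lx|_]; last by rewrite eqxx.
rewrite -lx in xE * => fl; apply/imsetP; exists l; first by rewrite inE.
exact: leaf_edgeE.
Qed.

Lemma pscore_le g : extends g f -> pscore f <= changes e g.
Proof. by move=> gf; rewrite /pscore; apply: bigmin_le. Qed.

Lemma pscore_ge n : (forall g, extends g f -> n <= changes e g) -> n <= pscore f.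
Proof.
move=> nle; rewrite /pscore; apply: bigmin_ge => //.
apply: leq_trans (nle _ (leaf_ext_extends set0)) _.
by apply/subset_leq_card/subsetP => E; rewrite inE => /andP [].
Qed.

Lemma pscore_le_card_colour c : pscore f <= #|[set l | f l == c]|.
Proof.
pose W : {set V} := [set _ | ~~ c].
apply: leq_trans (pscore_le (leaf_ext_extends W)) _.
apply: leq_trans (changes_leaf_ext W) _.
rewrite changes_const ?add0n => [|u v]; last by rewrite !inE.
apply/eq_leq/eq_card => l.
by rewrite !inE; case: (f l); case: (c).
Qed.

End Extension.

Definition del_edge (p q : V) : rel V :=
  [rel x y | e x y && ~~ (((x == p) && (y == q)) || ((x == q) && (y == p)))].

Definition side (p q : V) : {set V} := [set w | connect (del_edge p q) p w].

Lemma del_edge_sym p q : symmetric (del_edge p q).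
Proof.
move=> x y; rewrite /del_edge /= e_sym; congr (_ && ~~ _).
by case: (x == p); case: (y == q); case: (x == q); case: (y == p).
Qed.

Lemma side_id p q : p \in side p q.
Proof. by rewrite inE connect0. Qed.

Lemma side_step p q u v : u \in side p q -> del_edge p q u v -> v \in side p q.
Proof. by rewrite !inE => pu /connect1; exact: connect_trans. Qed.

Lemma side_edge p q u v : u \in side p q -> e u v -> (v \in side p q) || (v \in [set p; q]).
Proof.
move=> uS euv; case D: (del_edge p q u v); first by rewrite (side_step uS D).
move: D; rewrite /del_edge /= euv /= => /negbFE /orP [] /andP [_ /eqP ->];
  by rewrite !inE eqxx ?orbT.
Qed.

Lemma side_leaf p q : is_leaf e p -> e p q -> side p q = [set p].
Proof.
move=> lp epq; apply/setP => w; rewrite !inE; apply/idP/eqP => [|->]; last exact: connect0.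
case/connectP => [[|z s] /=]; first by move=> _ ->.
by case/andP => /andP [epz]; rewrite (leaf_edge_uniq lp epz epq) !eqxx.
Qed.

Lemma side_edgeN p q : e p q -> q \notin side p q.
Proof.
move=> epq; rewrite inE; apply/negP => /connectP [s ps].
case: (shortenP ps) => [[|z [|w s']]] /=; first by move=> _ _ _ pq; rewrite pq e_irr in epq.
  by move=> dpz _ _ qz; move: dpz; rewrite -qz /del_edge /= !eqxx andbF.
move=> /and3P [dpz dzw ps'] us _ lq.
have := @acyc [:: p, z, w & s'] us isT; apply/negP/negPn; rewrite /cycle rcons_path.
apply/andP; split; last by rewrite /= -lq e_sym.
have sub : subrel (del_edge p q) e by move=> x y /andP [].
by apply: (sub_path sub); rewrite /= dpz dzw.
Qed.

Lemma sideC p q w : e p q -> (w \in side q p) = (w \notin side p q).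
Proof.
move=> epq; apply/idP/idP => [wq|wp].
  apply/negP => wp; move/negP: (side_edgeN epq); apply; rewrite !inE in wp wq *.
  have dC : del_edge q p =2 del_edge p q by move=> x y; rewrite /del_edge /= orbC.
  rewrite (eq_connect dC) (sym_connect_sym (@del_edge_sym p q)) in wq.
  exact: connect_trans wp wq.
suff : (w \in side p q) || (w \in side q p) by rewrite (negbTE wp).
pose S := [pred x | (x \in side p q) || (x \in side q p)].
have pqS x : (x == p) || (x == q) -> S x by case/orP => /eqP ->; rewrite /= side_id ?orbT.
apply: (connect_forward_closed (A := S) _ _ (conn p w)); last by rewrite /= side_id.
move=> u v /orP [] /side_edge /[apply]; rewrite in_set2 => /orP [vS|vqp].
- by rewrite /= vS.
- exact: pqS.
- by rewrite /= vS orbT.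
by apply: pqS; rewrite orbC.
Qed.

Lemma side_mono p q r : e p q -> e q r -> p != r -> side p q \subset side q r.
Proof.
move=> epq eqr npr; have nqr : q != r by apply: contraTneq eqr => ->; rewrite e_irr.
have nq x : x \in side p q -> x != q by apply: contraTneq => ->; exact: side_edgeN.
apply/subsetP => w; rewrite [w \in side p q]inE => pw.
pose S := [pred x | (x \in side p q) && (x \in side q r)].
suff /andP [] : S w by [].
apply: (connect_forward_closed (A := S) _ _ pw) => [u v /andP [up uq] duv|].
  have vp := side_step up duv; rewrite /= vp; apply: side_step uq _.
  by rewrite /del_edge /= (proj1 (andP duv)) (negbTE (nq u up)) (negbTE (nq v vp)) andbF.
rewrite /= side_id; apply: side_step (side_id q r) _.
by rewrite /del_edge /= e_sym epq eqxx (negbTE npr) (negbTE nqr).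
Qed.

Lemma path_del_edge p q x t :
  path e x t -> ~~ edge_of (x :: t) p q -> path (del_edge p q) x t.
Proof.
rewrite /edge_of /=; elim: t x => [//|y t IH] x /= /andP [exy pt].
rewrite !inE !xpair_eqE !negb_or => /andP [/andP [nxy nzip] /andP [nyx nzip']].
rewrite /del_edge /= exy IH ?negb_or ?nzip ?nzip' //= andbT.
by rewrite eq_sym (eq_sym y) nxy andbC eq_sym (eq_sym y) andbC nyx.
Qed.

Lemma changes_star_le1 u w z : e u w -> e w z -> u != z ->
  changes e (fun v => v \in side u w :|: [set w] :|: side z w) <= 1.
Proof.
move=> euw ewz nuz; set W := _ :|: _ :|: _.
have uW : u \in W by rewrite !in_setU side_id.
have zW : z \in W by rewrite !in_setU side_id orbT.
have wW : w \in W by rewrite !in_setU set11 orbT.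
have cut_at_w x y : e x y -> x \in W -> y \notin W -> x = w /\ y \notin [set u; z].
  move=> exy /setUP [/setUP [xS|/set1P ->]|xS] yW.
  - move: (side_edge xS exy) yW; rewrite in_set2 => /orP [yS|/orP [] /eqP ->]; rewrite ?uW ?wW //.
    by rewrite !in_setU yS.
  - by split=> //; rewrite in_set2; apply: contra yW => /orP [] /eqP ->.
  - move: (side_edge xS exy) yW; rewrite in_set2 => /orP [yS|/orP [] /eqP ->]; rewrite ?zW ?wW //.
    by rewrite !in_setU yS orbT.
pose N := [set y | e w y] :\: [set u; z].
apply: (@leq_trans #|[set [set w; y] | y in N]|).
  apply/subset_leq_card/subsetP => E; rewrite inE => /andP [Eedge /(changed_edge e_sym Eedge)].
  case=> x [y [exy -> xW yW]]; have [xw yuz] := cut_at_w x y exy xW yW.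
  apply/imsetP; exists y; last by rewrite xw.
  by move: yuz; rewrite !inE -xw exy andbT.
apply: leq_trans (leq_imset_card _ _) _; rewrite cardsD.
have /setIidPr -> : [set u; z] \subset [set y | e w y].
  by apply/subsetP => y; rewrite !inE => /orP [] /eqP ->; rewrite // e_sym.
by rewrite cards2 nuz; move: (deg3 w); rewrite /deg; lia.
Qed.


Section Balanced.
Variables (f : {ffun leafT e -> bool}) (k : nat).
Hypothesis balanced : forall c, #|[set l | f l == c]| = k.

Definition nleaves c (S : {set V}) : nat := #|[set l | (f l == c) && (val l \in S)]|.

Lemma nleaves_eq c (S S' : {set V}) :
  (forall l : leafT e, (val l \in S) = (val l \in S')) -> nleaves c S = nleaves c S'.
Proof. by move=> SS'; apply: eq_card => l; rewrite !inE SS'. Qed.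

Lemma nleaves_split c (S : {set V}) : nleaves c S + nleaves c (~: S) = k.
Proof.
rewrite -(balanced c) -(cardsID [set l : leafT e | val l \in S]).
by congr (_ + _); apply: eq_card => l; rewrite !inE andbC.
Qed.

Lemma nleavesU c (S S' : {set V}) :
  [disjoint S & S'] -> nleaves c (S :|: S') = nleaves c S + nleaves c S'.
Proof.
move=> dSS'; rewrite /nleaves -cardsUI.
rewrite (_ : _ :&: _ = set0) ?cards0 ?addn0.
  by apply: eq_card => l; rewrite !inE andb_orr.
apply/setP => l; rewrite !inE; case: (boolP (val l \in S)) => lS; rewrite ?andbF //.
by rewrite (disjointFr dSS' lS) !andbF.
Qed.

Lemma nleaves_colours c (S : {set V}) :
  nleaves c S + nleaves (~~ c) S = #|[set l : leafT e | val l \in S]|.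
Proof.
rewrite -(cardsID [set l | f l == c] [set l : leafT e | val l \in S]); congr (_ + _).
  by apply: eq_card => l; rewrite !inE andbC.
by apply: eq_card => l; rewrite !inE; case: (f l); case: c.
Qed.

Lemma nleaves1 c (S : {set V}) l0 :
  (forall l : leafT e, (val l \in S) = (l == l0)) -> nleaves c S = (f l0 == c).
Proof.
move=> S1; rewrite /nleaves (eq_card (B := [pred l | (f l0 == c) && (l == l0)])) => [|l].
  by case: (f l0 == c); [exact: card1 | exact: card0].
by rewrite !inE S1; case: (eqVneq l l0) => [->|]; rewrite ?andbT ?andbF.
Qed.

Lemma card_mismatch c (W : {set V}) :
  #|mismatch f (if c then W else ~: W)| = nleaves c (~: W) + nleaves (~~ c) W.
Proof.
rewrite /mismatch /nleaves -cardsUI (_ : _ :&: _ = set0) ?cards0 ?addn0.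
  by apply: eq_card => l; rewrite !inE; case: c; rewrite ?inE; case: (f l); case: (val l \in W).
by apply/setP => l; rewrite !inE; case: c; case: (f l); case: (val l \in W).
Qed.

Lemma switch_extension c u w z : e u w -> e w z -> u != z ->
    nleaves (~~ c) (side u w) < nleaves c (side u w) ->
    nleaves c (side w z) < nleaves (~~ c) (side w z) ->
  exists2 g, extends g f & changes e g < k.
Proof.
move=> euw ewz nuz goodA badB; set W := side u w :|: [set w] :|: side z w.
have nW c' : nleaves c' W = nleaves c' (side u w) + (k - nleaves c' (side w z)).
  rewrite -(nleaves_split c' (side w z)) addKn -nleavesU.
    apply: nleaves_eq => l; rewrite !in_setU in_set1 (sideC _ ewz).
    suff -> : (val l == w) = false by rewrite orbF in_setC.
    by apply/negbTE; apply: contraNneq (mid_nonleaf euw ewz nuz) => <-; exact: valP.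
  rewrite -subsets_disjoint.
  by apply: side_mono.
exists (leaf_ext f (if c then W else ~: W)); first exact: leaf_ext_extends.
apply: leq_ltn_trans (changes_leaf_ext _ _) _.
have cut1 : changes e (fun v => v \in if c then W else ~: W) <= 1.
  by case: (c); rewrite ?changes_setC; exact: changes_star_le1.
rewrite card_mismatch; have := nleaves_split c W; have := nW c; have := nW (~~ c).
have := nleaves_split c (side w z); have := nleaves_split (~~ c) (side w z).
lia.
Qed.

End Balanced.

Section PathSystem.
Variables (k : nat) (a b : 'I_k -> leafT e) (P : 'I_k -> seq V).
Hypothesis card_leaves : #|{: leafT e}| = 2 * k.
Hypothesis Ppath : forall i, leaf_path (P i) (a i) (b i).
Hypothesis Pdisj : forall i j, i != j -> forall u v, ~~ (edge_of (P i) u v && edge_of (P j) u v).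

Definition endpoint (ic : 'I_k * bool) : leafT e := if ic.2 then b ic.1 else a ic.1.

Lemma endpoint_edge ic :
  exists u, e (val (endpoint ic)) u && edge_of (P ic.1) (val (endpoint ic)) u.
Proof.
case: ic => i [] /=; have [nab [t [-> [pt [_ lt]]]]] := Ppath i.
  have [|w wt] := mem_zip_last (val (a i)) (t := t).
    by apply: contraNneq nab => t0; rewrite -lt t0.
  exists w; rewrite -lt edge_ofC /edge_of wt andbT e_sym.
  exact: (path_zip pt wt).
case: t pt lt => [|z t] pt lt; first by rewrite -lt eqxx in nab.
by exists z; case/andP: pt => -> _; rewrite /edge_of /= inE eqxx.
Qed.

Lemma endpoint_inj : injective endpoint.
Proof.
move=> ic jc E.
have [u /andP [eu Pu]] := endpoint_edge ic; have [u' /andP [eu' Pu']] := endpoint_edge jc.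
rewrite E in eu Pu; have uu' := leaf_edge_uniq (valP (endpoint jc)) eu eu'; subst u'.
have ij : ic.1 = jc.1.
  by apply/eqP; apply: contraT => nij; have := Pdisj nij (val (endpoint jc)) u; rewrite Pu Pu'.
case: ic jc ij E {eu eu' Pu Pu'} => i c [j c'] /= <-; have [nab _] := Ppath i.
by case: c; case: c' => // E; move: E nab; rewrite /endpoint /= => ->; rewrite eqxx.
Qed.

Lemma endpoint_bij : bijective endpoint.
Proof.
apply: (inj_card_bij endpoint_inj).
by rewrite card_leaves card_prod card_ord card_bool mulnC.
Qed.

Lemma fchar_endpoint p i c : fchar a b p (endpoint (i, c)) = (c == p i).
Proof.
have endE j c' : (endpoint (i, c) == endpoint (j, c')) = ((i, c) == (j, c')).
  exact: (inj_eq endpoint_inj).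
rewrite ffunE; apply/existsP/idP => [[j]|].
  rewrite -[a j]/(endpoint (j, false)) -[b j]/(endpoint (j, true)) !endE !xpair_eqE.
  by case/orP => /andP [/andP [/eqP -> /eqP ->]]; case: (p j).
move=> cp; exists i; rewrite -[a i]/(endpoint (i, false)) -[b i]/(endpoint (i, true)) !endE.
by clear endE; case: c cp => /eqP <-; rewrite !eqxx ?orbT.
Qed.

Lemma fchar_inj : injective (fchar a b).
Proof.
move=> p1 p2 E; apply/ffunP => i.
by move: (fchar_endpoint p1 i true); rewrite E fchar_endpoint; case: (p1 i); case: (p2 i).
Qed.

Lemma card_colours (f : {ffun leafT e -> bool}) :
  #|[set l | f l == true]| + #|[set l | f l == false]| = 2 * k.
Proof.
rewrite -card_leaves -cardsT -(cardsID [set l | f l == true] [set: leafT e]) setTI; congr (_ + _).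
by apply: eq_card => l; rewrite !inE; case: (f l).
Qed.

Lemma pscore_le_k (f : {ffun leafT e -> bool}) : pscore f <= k.
Proof.
have := pscore_le_card_colour f true; have := pscore_le_card_colour f false.
have := card_colours f; lia.
Qed.

Lemma separated_le_pscore (f : {ffun leafT e -> bool}) :
  #|[set i | f (a i) != f (b i)]| <= pscore f.
Proof.
apply: pscore_ge => g /forallP gf.
pose R i E := [exists x, exists y, [&& E == [set x; y], x != y & edge_of (P i) x y]].
apply: (leq_card_witness (R := R)) => [i|i j iS jS E].
  rewrite inE => fab; have [_ [t [Pi [pt [_ lt]]]]] := Ppath i.
  have [[x y] xyt /= gxy] : exists2 uv, uv \in zip (val (a i) :: t) t & g uv.1 != g uv.2.
    by apply: zip_change; rewrite lt (eqP (gf (a i))) (eqP (gf (b i))).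
  exists [set x; y].
    rewrite inE; apply/andP; split.
      by apply/imsetP; exists (x, y); rewrite // inE (path_zip pt xyt).
    by apply/existsP; exists x; rewrite set21 /=; apply/existsP; exists y; rewrite set22.
  apply/existsP; exists x; apply/existsP; exists y; rewrite eqxx /edge_of Pi /= xyt andbT.
  by apply: contraNneq gxy => ->.
move=> /existsP [x /existsP [y /and3P [/eqP -> nxy Pixy]]].
move=> /existsP [x' /existsP [y' /and3P [/eqP E' nxy' Pjxy']]].
apply/eqP; apply: contraT => nij; have := Pdisj nij x y; rewrite Pixy /=.
by rewrite (edge_of_set2 Pjxy' nxy' (esym E')).
Qed.

Lemma side_endpoints i p q : ~~ edge_of (P i) p q ->
  (val (a i) \in side p q) = (val (b i) \in side p q).
Proof.
have [_ [t [-> [pt [_ lt]]]]] := Ppath i => /(path_del_edge pt) pd.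
have ab : connect (del_edge p q) (val (a i)) (val (b i)) by apply/connectP; exists t.
have sym := sym_connect_sym (del_edge_sym p q).
rewrite !inE; apply/idP/idP => [pa|pb]; first exact: connect_trans pa ab.
by apply: connect_trans pb _; rewrite sym.
Qed.

Lemma odd_card_leaves (S : {set V}) i0 :
  (forall i, i != i0 -> (val (a i) \in S) = (val (b i) \in S)) ->
  val (a i0) \in S -> val (b i0) \notin S -> odd #|[set l : leafT e | val l \in S]|.
Proof.
move=> same aS bS.
rewrite -(on_card_preimset (onW_bij _ endpoint_bij)) -sum1_card big_mkcond /=.
rewrite (eq_bigr (fun ic => (fun i c => nat_of_bool (val (endpoint (i, c)) \in S)) ic.1 ic.2));
  last by case=> i c _; rewrite !inE.
rewrite -(pair_bigA _ (fun i c => nat_of_bool (val (endpoint (i, c)) \in S))) (bigD1 i0) //=.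
rewrite big_bool /= (negbTE bS) aS.
rewrite (eq_bigr (fun i => 2 * (val (a i) \in S))) => [|i /same]; last first.
  by rewrite big_bool /= => ->; case: (_ \in S).
by rewrite -big_distrr /= mul2n odd_double.
Qed.

Section SplitPath.
Variables (f : {ffun leafT e -> bool}) (i0 : 'I_k) (t : seq V).
Hypothesis balanced : forall c, #|[set l | f l == c]| = k.
Hypothesis fab : f (a i0) = f (b i0).
Hypotheses (Pi0 : P i0 = val (a i0) :: t) (pt : path e (val (a i0)) t).
Hypotheses (ut : uniq (val (a i0) :: t)) (lt : last (val (a i0)) t = val (b i0)).

Let n := size t.
Let v j := nth (val (a i0)) (val (a i0) :: t) j.
Let A j := side (v j) (v j.+1).

Lemma n_gt0 : 0 < n.
Proof.
have [nab _] := Ppath i0; rewrite lt0n size_eq0; apply: contraNneq nab => t0.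
by rewrite -lt t0.
Qed.

Lemma v_edge j : j < n -> e (v j) (v j.+1).
Proof. exact: (pathP _ pt). Qed.

Lemma v_eq i j : i <= n -> j <= n -> (v i == v j) = (i == j).
Proof. by move=> i_n j_n; rewrite /v nth_uniq. Qed.

Lemma v_last : v n = val (b i0).
Proof. by rewrite /v -lt (last_nth (val (a i0))). Qed.

Lemma v_edge_of j : j < n -> edge_of (P i0) (v j) (v j.+1).
Proof. by move=> jn; rewrite /edge_of Pi0 /= mem_zip_nth. Qed.

Lemma A_mono : {in gtn n &, {homo A : i j / i <= j >-> i \subset j}}.
Proof.
apply: homo_leq_in => [S|S R T|i j _ jn l /andP [_ lj]|i _ i1n].
- exact: subxx.
- exact: subset_trans.
- by move: jn; rewrite !inE; exact: ltn_trans lj.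
move: i1n; rewrite inE => i1n.
by apply: side_mono; [apply: v_edge | apply: v_edge | rewrite v_eq]; lia.
Qed.

Lemma A_first l : (val l \in A 0) = (l == a i0).
Proof. by rewrite /A (side_leaf (valP (a i0)) (v_edge n_gt0)) inE (inj_eq val_inj). Qed.

Lemma A_last l : (val l \in A n.-1) = (l != b i0).
Proof.
have enl : e (v n) (v n.-1).
  by rewrite e_sym; move: (@v_edge n.-1); rewrite prednK ?n_gt0 // => /(_ (leqnn n)).
rewrite /A prednK ?n_gt0 // (sideC _ enl) (side_leaf _ enl) ?v_last ?(valP (b i0)) //.
by rewrite inE (inj_eq val_inj).
Qed.

Lemma A_odd j : j < n -> odd #|[set l : leafT e | val l \in A j]|.
Proof.
move=> jn; have jD : j \in gtn n by [].
have D0 : 0 \in gtn n := n_gt0.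
have Dn : n.-1 \in gtn n by rewrite inE prednK ?n_gt0.
apply: (odd_card_leaves (i0 := i0)) => [i ni||].
- apply: side_endpoints; apply: contraNN (Pdisj ni (v j) (v j.+1)) => Pi.
  by rewrite Pi v_edge_of.
- by apply: (subsetP (A_mono D0 jD (leq0n j))); rewrite A_first.
apply/negP => bA; have := A_last (b i0).
by rewrite eqxx (subsetP (A_mono jD Dn _) _ bA) // -ltnS prednK ?n_gt0.
Qed.

Lemma monochrome_path_extension : exists2 g, extends g f & changes e g < k.
Proof.
set c := f (a i0).
(* c is the strict majority state on the a-side of the first edge of P i0 but
   not of the last; at the first edge where this fails, parity makes c a strict
   minority. *)
pose good j := nleaves f (~~ c) (A j) < nleaves f c (A j).
have good0 : good 0.
  by rewrite /good !(nleaves1 f _ A_first) /c eqxx; case: (f (a i0)).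
have bad_last : ~~ good n.-1.
  have Bn l : (val l \in ~: A n.-1) = (l == b i0) by rewrite in_setC A_last negbK.
  have := nleaves_split balanced c (A n.-1); have := nleaves_split balanced (~~ c) (A n.-1).
  rewrite /good !(nleaves1 f _ Bn) /c fab eqxx.
  by case: (f (b i0)) => /=; lia.
have [j jn /andP [gj ngj]] := ex_switch good0 bad_last.
have j2n : j.+2 <= n by rewrite -ltn_predRL.
have j1n : j < n := ltnW j2n.
apply: (switch_extension balanced (c := c) (u := v j) (w := v j.+1) (z := v j.+2)) => //.
- exact: v_edge j1n.
- exact: v_edge j2n.
- by rewrite v_eq ?(ltnW j1n) // (ltn_eqF (leqW (leqnn j.+1))).
have := A_odd j2n; rewrite -(nleaves_colours f c); move: ngj; rewrite /good.
by case: ltngtP => // -> _; rewrite addnn odd_double.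
Qed.

End SplitPath.

Lemma pscore_fchar p : pscore (fchar a b p) = k.
Proof.
apply/eqP; rewrite eqn_leq pscore_le_k /=; apply: leq_trans (separated_le_pscore _).
rewrite (_ : [set i | _] = setT) ?cardsT ?card_ord //; apply/setP => i.
rewrite !inE -[a i]/(endpoint (i, false)) -[b i]/(endpoint (i, true)) !fchar_endpoint.
by case: (p i).
Qed.

Lemma pscore_eq_k_balanced (f : {ffun leafT e -> bool}) : pscore f = k -> forall c, #|[set l | f l == c]| = k.
Proof.
move=> fk c; have := pscore_le_card_colour f true; have := pscore_le_card_colour f false.
by have := card_colours f; case: c; lia.
Qed.

Lemma fchar_of_pscore_eq_k (f : {ffun leafT e -> bool}) : pscore f = k -> exists p, fchar a b p = f.
Proof.
move=> fk; have balanced := pscore_eq_k_balanced fk.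
have fsplit i : f (a i) != f (b i).
  apply/negP => /eqP fab; have [_ [t [Pi [pt [ut lt]]]]] := Ppath i; rewrite Pi in ut.
  have [g gf] := monochrome_path_extension balanced fab Pi pt ut lt.
  by rewrite ltnNge -fk (pscore_le gf).
exists [ffun i => f (b i)]; apply/ffunP => l; have [g _ gK] := endpoint_bij.
rewrite -(gK l); case: (g l) => i c; rewrite fchar_endpoint ffunE.
by case: c; move: (fsplit i); rewrite /endpoint /=; case: (f (a i)); case: (f (b i)).
Qed.

End PathSystem.

End Tree.

Theorem lemma6 (V : finType) (e : rel V) (k : nat)
  (a b : 'I_k -> leafT e) (P : 'I_k -> seq V) :
  1 <= k ->
  binary_phylo_tree e ->
  #|{: leafT e}| = 2 * k ->
  (forall i, leaf_path (P i) (a i) (b i)) ->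
  (forall i j, i != j -> forall u v, ~~ (edge_of (P i) u v && edge_of (P j) u v)) ->
  injective (fchar a b) /\
  (forall f : {ffun leafT e -> bool}, pscore f = k <-> exists p, fchar a b p = f).
Proof.
move=> _ [[[e_sym e_irr] [conn acyc]] [_ deg3]] card_leaves Ppath Pdisj.
split; first exact: fchar_inj.
move=> f; split; first exact: fchar_of_pscore_eq_k.
by case=> p <-; exact: pscore_fchar.
Qed.
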